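(* For any $\alpha>0$ there exists $\beta_0>0$ such that the following holds for all $0<\beta\le\beta_0$. Let $\Lambda_1,\dots,\Lambda_m\subseteq\mathbb{R}^d$ be hyperplanes, let $b\in\bigcap_{i\in[m]}\Lambda_i$, and let $j$ be the smallest integer for which the set $V=\{v_1,\dots,v_m\}$ of their unit normal vectors is $(j,\beta^j)$-flat with respect to some $j$-plane $\Lambda_B$ with $b\in\Lambda_B$. If for some point $p$ the angle between $v=b-p$ and $\Lambda_i$ is at most $\beta^d$ for every $i\in[m]$, then the angle between $v$ and $\Lambda:=\Lambda_B(b)^{\perp}$ is at most $\alpha$.
   Context: A $j$-plane is an affine subspace of dimension $j$. The angle between a vector $v$ and a plane $\Lambda$ is the infimum of the angles between $v$ and vectors $w\in\Lambda-\Lambda$. A set of vectors $V$ is $(j,\alpha)$-flat with respect to a $j$-plane $\Lambda$ if every $v\in V$ makes angle at most $\alpha$ with $\Lambda$. For a $j$-plane $\gamma\subseteq\mathbb{R}^{d}$ and a point $p\in\gamma$, $\gamma(p)^{\perp}$ denotes the $(d-j)$-plane through $p$ orthogonal to $\gamma$. *)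

From HB Require Import structures.
From mathcomp Require Import all_boot all_order all_algebra.
From mathcomp Require Import all_classical all_reals.
From mathcomp Require Import ereal trigo.
Set Implicit Arguments. Unset Strict Implicit. Unset Printing Implicit Defensive.
Import Order.TTheory GRing.Theory Num.Theory.
Local Open Scope classical_set_scope.
Local Open Scope ring_scope.

Section Geometry.
Variables (R : realType) (d : nat).
Notation vec := 'rV[R]_d.

Definition dotv (u w : vec) : R := (u *m w^T) 0 0.
Definition normv (u : vec) : R := Num.sqrt (dotv u u).

Definition vec_angle (u w : vec) : R := acos (dotv u w / (normv u * normv w)).

Definition jplane (j : nat) (S : set vec) : Prop :=
  exists (a : vec) (W : 'M[R]_d),
    \rank W = j /\ S = [set x | (x - a <= W)%MS].

Definition diffset (S : set vec) : set vec :=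
  [set w | exists x y, S x /\ S y /\ w = x - y].

(* angle between a vector v and a plane S: infimum of the angles between v and
   the (nonzero) vectors w in S - S; +oo if there is no such w (S a point) *)
Definition angle_vp (v : vec) (S : set vec) : \bar R :=
  ereal_inf [set (vec_angle v w)%:E | w in [set w | diffset S w /\ w != 0]].

Definition flat_wrt {m : nat} (j : nat) (alpha : R) (V : 'I_m -> vec)
    (L : set vec) : Prop :=
  jplane j L /\ forall i, (angle_vp (V i) L <= alpha%:E)%E.

Definition perp_plane (S : set vec) (p : vec) : set vec :=
  [set x | forall u, diffset S u -> dotv (x - p) u = 0].

End Geometry.

(* Split b - p = u + q with u in the direction W of Λ_B and q orthogonal to W,
   so that q lies in Λ_B(b)^⊥ - Λ_B(b)^⊥. If u is small compared with b - p,
   then b - p makes an angle at most α with q. Otherwise we reach a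
   contradiction with the minimality of j: b - p is almost parallel to every
   Λ_i, hence almost orthogonal to every normal v_i, while each v_i is within
   O(β^j) of a unit vector w_i of W. Then <u, w_i> = O(β^j |b - p|), so
   projecting w_i onto the hyperplane u^⊥ of W moves it by O(β^j / sin α); the
   resulting vector is within angle β^(j-1) of v_i once β is small, i.e. V is
   (j-1, β^(j-1))-flat with respect to the (j-1)-plane b + (W ∩ u^⊥). *)

From HB Require Import structures.
From mathcomp Require Import all_boot all_order all_algebra.
From mathcomp Require Import all_classical all_reals.
From mathcomp Require Import ereal trigo.
From mathcomp Require Import normedtype derive.
From mathcomp Require Import ring lra zify.
Import Order.TTheory GRing.Theory Num.Theory.
Import numFieldNormedType.Exports.
Local Open Scope classical_set_scope.
Local Open Scope ring_scope.

Section Trigonometry.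
Set Implicit Arguments. Unset Strict Implicit.
Variable R : realType.

Lemma sin_MVT {t : R} : 0 <= t -> exists2 c, 0 <= c <= t & sin t = cos c * t.
Proof.
move=> t_ge0.
have sin_derive x : x \in `]0, t[ -> is_derive x 1 (@sin R) (cos x).
  by move=> _; exact: is_derive_sin.
have sin_cont : {within `[0, t], continuous (@sin R)}.
  exact/continuous_subspaceT/continuous_sin.
have [c ct] := MVT_segment t_ge0 sin_derive sin_cont.
by rewrite sin0 !subr0 => ->; exists c.
Qed.

Lemma one_sub_cos (y : R) : 1 - cos y = sin (y / 2) ^+ 2 * 2.
Proof.
have {1}-> : y = (y / 2) *+ 2 by rewrite -mulr_natr divfK ?pnatr_eq0.
rewrite cos_mulr2n cos2sin2; ring.
Qed.

Lemma one_sub_cos_le (y : R) : 0 <= y -> 1 - cos y <= y ^+ 2 / 2.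
Proof.
move=> y_ge0; rewrite one_sub_cos.
have [c _ ->] := sin_MVT (divr_ge0 y_ge0 (ler0n _ 2)).
have : cos c ^+ 2 <= 1 by rewrite -(cos2Dsin2 c) lerDl sqr_ge0.
have := sqr_ge0 y; nra.
Qed.

Lemma one_sub_cos_ge (x : R) : 0 <= x <= 1 -> (cos 1 * x) ^+ 2 / 2 <= 1 - cos x.
Proof.
case/andP=> x_ge0 x_le1; rewrite one_sub_cos.
have [c /andP[c_ge0 c_le] ->] := sin_MVT (divr_ge0 x_ge0 (ler0n _ 2)).
have pi_ge2 := pi_ge2 R.
have cos1_le : cos 1 <= cos c.
  by rewrite leNgt ltr_cos ?in_itv /= ?c_ge0 -?leNgt; lra.
have cos1_sqr_le : cos 1 ^+ 2 <= cos c ^+ 2 by have := cos1_gt0 R; nra.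
rewrite !exprMn; have := sqr_ge0 x; nra.
Qed.

End Trigonometry.

Section Euclidean.
Set Implicit Arguments. Unset Strict Implicit.
Variables (R : realType) (d : nat).
Notation vec := 'rV[R]_d.
Implicit Types (u w x : vec) (a : R).

Lemma dotvE u w : dotv u w = \sum_k u 0 k * w 0 k.
Proof. by rewrite /dotv !mxE; apply: eq_bigr => k _; rewrite mxE. Qed.

Lemma dotvC u w : dotv u w = dotv w u.
Proof. by rewrite !dotvE; apply: eq_bigr => k _; rewrite mulrC. Qed.

Lemma dotvDl u u' w : dotv (u + u') w = dotv u w + dotv u' w.
Proof. by rewrite !dotvE -big_split; apply: eq_bigr => k _; rewrite mxE mulrDl. Qed.

Lemma dotvZl a u w : dotv (a *: u) w = a * dotv u w.
Proof. by rewrite !dotvE mulr_sumr; apply: eq_bigr => k _; rewrite mxE mulrA. Qed.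

Lemma dotvNl u w : dotv (- u) w = - dotv u w.
Proof. by rewrite -scaleN1r dotvZl mulN1r. Qed.

Lemma dotvBl u u' w : dotv (u - u') w = dotv u w - dotv u' w.
Proof. by rewrite dotvDl dotvNl. Qed.

Lemma dotvDr u w w' : dotv u (w + w') = dotv u w + dotv u w'.
Proof. by rewrite dotvC dotvDl !(dotvC _ u). Qed.

Lemma dotvZr a u w : dotv u (a *: w) = a * dotv u w.
Proof. by rewrite dotvC dotvZl dotvC. Qed.

Lemma dotvBr u w w' : dotv u (w - w') = dotv u w - dotv u w'.
Proof. by rewrite dotvC dotvBl !(dotvC _ u). Qed.

Lemma dotv0l w : dotv 0 w = 0.
Proof. by rewrite -(scale0r 0) dotvZl mul0r. Qed.

Lemma dotv0r w : dotv w 0 = 0.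
Proof. by rewrite dotvC dotv0l. Qed.

Lemma dotvv_ge0 u : 0 <= dotv u u.
Proof. by rewrite dotvE sumr_ge0 // => k _; rewrite -expr2 sqr_ge0. Qed.

Lemma dotvv_eq0 u : (dotv u u == 0) = (u == 0).
Proof.
apply/idP/eqP => [|->]; last by rewrite dotv0l.
rewrite dotvE psumr_eq0 => [/allP u0|k _]; last by rewrite -expr2 sqr_ge0.
apply/rowP => k; rewrite mxE; apply/eqP.
by have := u0 k (mem_index_enum _); rewrite /= -expr2 sqrf_eq0.
Qed.

Lemma dotvv_gt0 u : (0 < dotv u u) = (u != 0).
Proof. by rewrite lt_def dotvv_ge0 dotvv_eq0 andbT. Qed.

Lemma normv_ge0 u : 0 <= normv u.
Proof. exact: sqrtr_ge0. Qed.

Lemma normv_gt0 u : (0 < normv u) = (u != 0).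
Proof. by rewrite sqrtr_gt0 dotvv_gt0. Qed.

Lemma sqr_normv u : normv u ^+ 2 = dotv u u.
Proof. by rewrite sqr_sqrtr // dotvv_ge0. Qed.

Lemma CauchySchwarz u w : dotv u w ^+ 2 <= dotv u u * dotv w w.
Proof.
have [->|w0] := eqVneq w 0; first by rewrite dotv0r dotv0l expr0n /= mulr0.
have := dotvv_ge0 (dotv w w *: u - dotv u w *: w).
rewrite !(dotvBl, dotvBr, dotvZl, dotvZr) (dotvC w u).
have ww_gt0 : 0 < dotv w w by rewrite dotvv_gt0.
nra.
Qed.

Lemma dotvvD_le u w : dotv (u + w) (u + w) <= 2 * (dotv u u + dotv w w).
Proof.
have := dotvv_ge0 (u - w).
rewrite !(dotvBl, dotvBr, dotvDl, dotvDr) (dotvC w u); lra.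
Qed.

Definition unitv u : vec := (normv u)^-1 *: u.

Definition vec_cos u w : R := dotv u w / (normv u * normv w).

Lemma unitv_id u : normv u = 1 -> unitv u = u.
Proof. by move=> u1; rewrite /unitv u1 invr1 scale1r. Qed.

Lemma dotv_unitv u : u != 0 -> dotv (unitv u) (unitv u) = 1.
Proof.
rewrite -normv_gt0 => u_gt0.
by rewrite dotvZl dotvZr -sqr_normv; field; rewrite gt_eqF.
Qed.

Lemma vec_cosE u w : vec_cos u w = dotv (unitv u) (unitv w).
Proof. by rewrite dotvZl dotvZr mulrA -invfM mulrC. Qed.

Lemma norm_dotv_le u w : `|dotv u w| <= normv u * normv w.
Proof.
rewrite -ler_sqr ?nnegrE ?mulr_ge0 ?normv_ge0 //.
by rewrite real_normK ?num_real // exprMn !sqr_normv CauchySchwarz.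
Qed.

Lemma norm_vec_cos_le1 u w : `|vec_cos u w| <= 1.
Proof.
have [uw0|uw_neq0] := eqVneq (normv u * normv w) 0.
  by rewrite /vec_cos uw0 invr0 mulr0 normr0.
have uw_gt0 : 0 < normv u * normv w by rewrite lt_def uw_neq0 mulr_ge0 ?normv_ge0.
by rewrite normrM normfV (gtr0_norm uw_gt0) ler_pdivrMr // mul1r norm_dotv_le.
Qed.

Lemma cos_vec_angle u w : cos (vec_angle u w) = vec_cos u w.
Proof. by rewrite acosK // in_itv /= -ler_norml norm_vec_cos_le1. Qed.

Lemma vec_angle_ge0 u w : 0 <= vec_angle u w.
Proof. by rewrite acos_ge0 // -ler_norml norm_vec_cos_le1. Qed.

Lemma vec_angle_lepi u w : vec_angle u w <= pi.
Proof. by rewrite acos_lepi // -ler_norml norm_vec_cos_le1. Qed.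

Lemma vec_angle_le u w t : 0 <= t <= pi -> cos t <= vec_cos u w -> vec_angle u w <= t.
Proof.
move=> t_range; rewrite -cos_vec_angle !leNgt; apply: contra => lt_t.
by rewrite ltr_cos // in_itv /= ?vec_angle_ge0 ?vec_angle_lepi.
Qed.

Lemma dotv_unitvB_le u w : u != 0 -> w != 0 ->
  dotv (unitv u - unitv w) (unitv u - unitv w) <= vec_angle u w ^+ 2.
Proof.
move=> u0 w0; rewrite !(dotvBl, dotvBr) !dotv_unitv // (dotvC (unitv w)) -vec_cosE.
have := one_sub_cos_le (vec_angle_ge0 u w); rewrite cos_vec_angle; lra.
Qed.

Lemma sub_kermx_tr_dotv u w : (u <= kermx w^T)%MS = (dotv u w == 0).
Proof.
apply/sub_kermxP/eqP => [uw0|uw0]; first by rewrite /dotv uw0 mxE.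
by apply/matrixP => i k; rewrite !ord1 [RHS]mxE.
Qed.

Lemma dotv_kermx_tr m (W : 'M[R]_(m, d)) q y :
  (q <= kermx W^T)%MS -> (y <= W)%MS -> dotv q y = 0.
Proof.
move=> /sub_kermxP qW /submxP[D ->].
by rewrite /dotv trmx_mul mulmxA qW mul0mx mxE.
Qed.

Lemma orth_decomp m (W : 'M[R]_(m, d)) x :
  exists u q, [/\ (u <= W)%MS, (q <= kermx W^T)%MS & x = u + q].
Proof.
have cap0 : \rank (W :&: kermx W^T)%MS = 0%N.
  apply/eqP; rewrite mxrank_eq0; apply/eqP/row_matrixP => i; rewrite row0.
  apply/eqP; rewrite -dotvv_eq0; apply/eqP/dotv_kermx_tr.
    exact: submx_trans (row_sub i _) (capmxSr _ _).
  exact: submx_trans (row_sub i _) (capmxSl _ _).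
have := mxrank_sum_cap W (kermx W^T); rewrite cap0 addn0 mxrank_ker mxrank_tr.
rewrite subnKC ?rank_leq_col // => full.
have : (x <= W + kermx W^T)%MS by apply: submx_full; rewrite /row_full full.
case/sub_addsmxP => c ->; exists (c.1 *m W), (c.2 *m kermx W^T).
by rewrite !submxMl.
Qed.

Lemma mxrank_cap_kermx_tr m (W : 'M[R]_(m, d)) u : (u <= W)%MS -> u != 0 ->
  \rank (W :&: kermx u^T)%MS = (\rank W).-1.
Proof.
move=> uW u0; set K := kermx u^T.
have rankK : \rank K = d.-1 by rewrite mxrank_ker mxrank_tr rank_rV u0 subn1.
have uK : ~~ (u <= K)%MS by rewrite sub_kermx_tr_dotv dotvv_eq0.
have ltK : (K < W + K)%MS.
  rewrite ltmxE addsmxSr /=; apply: contra uK.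
  exact: submx_trans (submx_trans uW (addsmxSl W K)).
have := rank_ltmx ltK; have := rank_leq_col (W + K)%MS.
have := mxrank_sum_cap W K; have := rank_leq_col W; rewrite rankK; lia.
Qed.

Definition affine_plane (c : vec) m (W : 'M[R]_(m, d)) : set vec :=
  [set x | (x - c <= W)%MS].

Lemma diffset_affine_plane c m (W : 'M[R]_(m, d)) :
  diffset (affine_plane c W) = [set w | (w <= W)%MS].
Proof.
apply/seteqP; split => [_ [x [y [xW [yW ->]]]] | w wW] /=.
  by rewrite -(subrKA c) addmx_sub // -opprB -scaleN1r scalemx_sub.
by exists (w + c), c; rewrite /affine_plane /= addrK subrr sub0mx.
Qed.

Local Open Scope ereal_scope.

Lemma angle_vp_le x S w (t : R) : diffset S w -> w != 0%R ->
  (vec_angle x w <= t)%R -> angle_vp x S <= t%:E.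
Proof.
move=> Sw w0 le_t; apply: le_trans (_ : (vec_angle x w)%:E <= _); last by rewrite lee_fin.
by apply: ereal_inf_lbound; exists w.
Qed.

Lemma angle_vp_le_near x S (t : R) : x != 0%R -> (0 < t)%R -> angle_vp x S <= t%:E ->
  exists2 w, diffset S w /\ w != 0%R &
    (dotv (unitv x - unitv w) (unitv x - unitv w) <= 4 * t ^+ 2)%R.
Proof.
move=> x0 t_gt0 le_t.
have : angle_vp x S < (t + t)%:E by apply: le_lt_trans le_t _; rewrite lte_fin ltrDl.
move/ereal_inf_lt => [_ [w [Sw w0] <-]]; rewrite lte_fin => lt_2t.
exists w => //; apply: le_trans (dotv_unitvB_le x0 w0) _.
by have := vec_angle_ge0 x w; nra.
Qed.

End Euclidean.

(* With [z = n - r] for a unit vector [n] and [a = dotv n r], this reads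
   [(1 - e) * normv z <= dotv n z]. *)
Lemma cos_perturbation_ineq (R : realFieldType) (a r e : R) :
  0 <= e <= 1 / 2 -> r <= e / 4 -> a ^+ 2 <= r ->
  (1 - e) ^+ 2 * (1 - 2 * a + r) <= (1 - a) ^+ 2.
Proof.
move=> /andP[e_ge0 e_le] r_le a_le.
have a_le_half : a <= 1 / 2 by nra.
set D := 1 - 2 * a + r.
have D_ge : 1 / 4 <= D by rewrite /D; nra.
have -> : (1 - a) ^+ 2 = D - (r - a ^+ 2) by rewrite /D; ring.
have : 0 <= e * (1 / 2 - e) * D by rewrite !mulr_ge0 //; lra.
have : 0 <= e * (D - 1 / 4) by rewrite mulr_ge0 //; lra.
nra.
Qed.

Section Geometry.
Set Implicit Arguments. Unset Strict Implicit.
Variables (R : realType) (d : nat).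
Notation vec := 'rV[R]_d.
Implicit Types (u w x z n : vec) (S : set vec).

Lemma diffset_perp_plane S p q :
  (forall w, diffset S w -> dotv q w = 0) -> diffset (perp_plane S p) q.
Proof.
move=> qS; exists (q + p), p; split; first by move=> w /qS; rewrite addrK.
by split; [move=> w _; rewrite subrr dotv0l | rewrite addrK].
Qed.

Lemma angle_vp_le_orth S u q (a : R) : diffset S q -> dotv u q = 0 ->
  0 <= a < pi / 2 -> u + q != 0 ->
  dotv u u <= sin a ^+ 2 * dotv (u + q) (u + q) -> (angle_vp (u + q) S <= a%:E)%E.
Proof.
move=> Sq uq0 /andP[a_ge0 a_lt] x0 u_small.
have pi_ge2 := pi_ge2 R.
have cos_a_gt0 : 0 < cos a by apply: cos_gt0_pihalf; lra.
have NxE : dotv (u + q) (u + q) = dotv u u + dotv q q.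
  by rewrite !(dotvDl, dotvDr) uq0 (dotvC q u) uq0 addr0 add0r.
have q_large : cos a ^+ 2 * dotv (u + q) (u + q) <= dotv q q.
  by move: u_small; rewrite NxE sin2cos2; nra.
have q0 : q != 0.
  rewrite -dotvv_gt0; apply: lt_le_trans q_large.
  by rewrite mulr_gt0 ?exprn_gt0 ?dotvv_gt0.
apply: (angle_vp_le Sq q0); apply: vec_angle_le; first by apply/andP; split; lra.
have nx_gt0 : 0 < normv (u + q) by rewrite normv_gt0.
have nq_gt0 : 0 < normv q by rewrite normv_gt0.
rewrite /vec_cos dotvDl uq0 add0r -sqr_normv expr2 invfM mulrA mulrAC mulfK ?gt_eqF //.
rewrite ler_pdivlMr // -ler_sqr ?nnegrE ?mulr_ge0 ?normv_ge0 ?(ltW cos_a_gt0) //.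
by rewrite exprMn !sqr_normv.
Qed.

Lemma sqr_dotv_le_angle_vp x n S (t : R) : normv n = 1 ->
  (forall w, diffset S w -> dotv n w = 0) -> 0 < t ->
  (angle_vp x S <= t%:E)%E -> dotv x n ^+ 2 <= 4 * t ^+ 2 * dotv x x.
Proof.
move=> n_unit n_orth t_gt0 x_near.
have [->|x0] := eqVneq x 0; first by rewrite !dotv0l expr0n /= mulr0.
have [w [Sw w0] near_w] := angle_vp_le_near x0 t_gt0 x_near.
have xE : x = normv x *: unitv x by rewrite scalerA mulfV ?scale1r // gt_eqF ?normv_gt0.
have wn0 : dotv (unitv w) n = 0 by rewrite dotvZl dotvC n_orth ?mulr0.
have -> : dotv x n = normv x * dotv (unitv x - unitv w) n.
  by rewrite {1}xE dotvZl dotvBl wn0 subr0.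
rewrite exprMn sqr_normv mulrC ler_wpM2r ?dotvv_ge0 //.
apply: le_trans (CauchySchwarz _ _) _.
by rewrite -[dotv n n]sqr_normv n_unit expr1n mulr1.
Qed.

Lemma sqr_dotv_le_near x n w (t : R) : dotv (n - w) (n - w) <= 4 * t ^+ 2 ->
  dotv x n ^+ 2 <= 4 * t ^+ 2 * dotv x x -> dotv x w ^+ 2 <= 16 * t ^+ 2 * dotv x x.
Proof.
move=> near_w xn_small.
have -> : dotv x w = dotv x n - dotv x (n - w) by rewrite dotvBr opprB addrC subrK.
have xnw_small : dotv x (n - w) ^+ 2 <= 4 * t ^+ 2 * dotv x x.
  by rewrite mulrC; apply: le_trans (CauchySchwarz _ _) _; rewrite ler_wpM2l ?dotvv_ge0.
have := sqr_ge0 (dotv x n + dotv x (n - w)); nra.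
Qed.

Lemma angle_vp_le_near_unit S n z (x : R) : diffset S z -> normv n = 1 ->
  0 <= x <= 1 -> 8 * dotv (n - z) (n - z) <= (cos 1 * x) ^+ 2 ->
  (angle_vp n S <= x%:E)%E.
Proof.
have [r ->] : exists r, z = n - r by exists (n - z); rewrite subKr.
rewrite subKr => Sz n_unit x_range near_z.
have nn1 : dotv n n = 1 by rewrite -sqr_normv n_unit expr1n.
set a := dotv n r.
have a_le : a ^+ 2 <= dotv r r by have := CauchySchwarz n r; rewrite nn1 mul1r.
have nzE : dotv n (n - r) = 1 - a by rewrite dotvBr nn1.
have zzE : dotv (n - r) (n - r) = 1 - 2 * a + dotv r r.
  by rewrite !(dotvBl, dotvBr) nn1 (dotvC r n) -/a; ring.
set e := (cos 1 * x) ^+ 2 / 2.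
have r_small : dotv r r <= e / 4 by rewrite /e; lra.
have e_range : 0 <= e <= 1 / 2.
  rewrite /e exprMn; case/andP: x_range => x_ge0 x_le1.
  have := cos1_gt0 R; have := cos_le1 (1 : R); have := sqr_ge0 x.
  have : x ^+ 2 <= 1 by rewrite exprn_ile1.
  nra.
have key := cos_perturbation_ineq e_range r_small a_le.
have a_le_half : a <= 1 / 2 by nra.
have z0 : n - r != 0 by apply/eqP => z0; move: nzE; rewrite z0 dotv0r; lra.
apply: (angle_vp_le Sz z0); apply: vec_angle_le.
  by have := pi_ge2 R; case/andP: x_range => *; apply/andP; split; lra.
apply: le_trans (_ : 1 - e <= _); first by have := one_sub_cos_ge x_range; rewrite -/e; lra.
have nz_gt0 : 0 < normv (n - r) by rewrite normv_gt0.
rewrite /vec_cos n_unit mul1r nzE ler_pdivlMr // -ler_sqr ?nnegrE ?mulr_ge0 ?normv_ge0 //; try lra.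
by rewrite exprMn sqr_normv zzE.
Qed.

End Geometry.

Section Slice.
Set Implicit Arguments. Unset Strict Implicit.
Variables (R : realType) (d : nat) (W : 'M[R]_d) (u q : 'rV[R]_d) (s : R).
Hypotheses (uW : (u <= W)%MS) (qW : (q <= kermx W^T)%MS).
Hypotheses (s_gt0 : 0 < s) (s_le1 : s <= 1).
Hypothesis u_large : s * dotv (u + q) (u + q) < dotv u u.

Lemma component_neq0 : u != 0.
Proof.
by rewrite -dotvv_gt0; apply: le_lt_trans u_large; rewrite mulr_ge0 ?dotvv_ge0 ?ltW.
Qed.

Lemma near_cap_kermx n w (t : R) : (w <= W)%MS -> dotv (n - w) (n - w) <= 4 * t ^+ 2 ->
  dotv (u + q) n ^+ 2 <= 4 * t ^+ 2 * dotv (u + q) (u + q) ->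
  exists2 z, (z <= W :&: kermx u^T)%MS & s * dotv (n - z) (n - z) <= 40 * t ^+ 2.
Proof.
move=> wW near_w xn_small.
have uu_gt0 : 0 < dotv u u by rewrite dotvv_gt0 component_neq0.
have uw_small : dotv u w ^+ 2 <= 16 * t ^+ 2 * dotv (u + q) (u + q).
  have := sqr_dotv_le_near near_w xn_small.
  by rewrite dotvDl (dotv_kermx_tr qW wW) addr0.
set lam := dotv u w / dotv u u.
exists (w - lam *: u).
  rewrite sub_capmx sub_kermx_tr_dotv -scaleNr addmx_sub ?scalemx_sub //=.
  by rewrite dotvDl dotvZl (dotvC w) mulNr /lam divfK ?(gt_eqF uu_gt0) ?subrr.
have lu_small : s * dotv (lam *: u) (lam *: u) <= 16 * t ^+ 2.
  rewrite dotvZl dotvZr /lam mulrA divfK ?(gt_eqF uu_gt0) //.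
  rewrite -mulrA mulrAC -expr2 mulrA ler_pdivrMr //.
  have := ler_wpM2l (ltW s_gt0) uw_small.
  have : 0 <= t ^+ 2 * (dotv u u - s * dotv (u + q) (u + q)).
    by rewrite mulr_ge0 ?sqr_ge0 // subr_ge0 ltW.
  nra.
rewrite opprB addrA addrAC.
have := ler_wpM2l (ltW s_gt0) (dotvvD_le (n - w) (lam *: u)).
have : 0 <= (1 - s) * dotv (n - w) (n - w) by rewrite mulr_ge0 ?dotvv_ge0 ?subr_ge0.
nra.
Qed.

Lemma angle_vp_slice_le n L c b (t x : R) : normv n = 1 ->
  (forall w, diffset L w -> dotv n w = 0) -> 0 < t -> 0 <= x <= 1 ->
  320 * t ^+ 2 <= s * (cos 1 * x) ^+ 2 ->
  (angle_vp (u + q) L <= t%:E)%E ->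
  (angle_vp n (affine_plane c W) <= t%:E)%E ->
  (angle_vp n (affine_plane b (W :&: kermx u^T)%MS) <= x%:E)%E.
Proof.
move=> n_unit n_orth t_gt0 x_range t_small x_near_L n_near_W.
have n0 : n != 0 by rewrite -normv_gt0 n_unit.
have [w [+ w0]] := angle_vp_le_near n0 t_gt0 n_near_W.
rewrite diffset_affine_plane unitv_id //= => wW near_w.
have xn_small := sqr_dotv_le_angle_vp n_unit n_orth t_gt0 x_near_L.
have [z zW near_z] := near_cap_kermx (scalemx_sub _ wW) near_w xn_small.
apply: (angle_vp_le_near_unit (z := z)) => //; first by rewrite diffset_affine_plane.
by rewrite -(ler_pM2l s_gt0); nra.
Qed.

Lemma flat_wrt_slice m (v : 'I_m -> 'rV[R]_d) (L : 'I_m -> set 'rV[R]_d) c b (t x : R) :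
  (forall i, normv (v i) = 1 /\ forall w, diffset (L i) w -> dotv (v i) w = 0) ->
  0 < t -> 0 <= x <= 1 -> 320 * t ^+ 2 <= s * (cos 1 * x) ^+ 2 ->
  (forall i, (angle_vp (u + q) (L i) <= t%:E)%E) ->
  (forall i, (angle_vp (v i) (affine_plane c W) <= t%:E)%E) ->
  flat_wrt (\rank W).-1 x v (affine_plane b (W :&: kermx u^T)%MS).
Proof.
move=> v_normal t_gt0 x_range t_small near_L near_W; split.
  by exists b, (W :&: kermx u^T)%MS; rewrite mxrank_cap_kermx_tr ?component_neq0.
move=> i; have [v_unit v_orth] := v_normal i.
exact: (angle_vp_slice_le b v_unit v_orth t_gt0 x_range t_small (near_L i) (near_W i)).
Qed.

End Slice.

Theorem lemma4 (R : realType) (d : nat) (alpha : R) :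
  0 < alpha ->
  exists beta0 : R, 0 < beta0 /\
  forall beta : R, 0 < beta -> beta <= beta0 ->
  forall (m : nat) (Lam : 'I_m -> set 'rV[R]_d) (v : 'I_m -> 'rV[R]_d)
         (b : 'rV[R]_d),
    (forall i, jplane d.-1 (Lam i)) ->
    (forall i, normv (v i) = 1 /\
               forall u, diffset (Lam i) u -> dotv (v i) u = 0) ->
    (forall i, Lam i b) ->
  forall (j : nat) (LB : set 'rV[R]_d),
    LB b -> flat_wrt j (beta ^+ j) v LB ->
    (forall j' : nat, (j' < j)%N ->
       ~ exists L' : set 'rV[R]_d, L' b /\ flat_wrt j' (beta ^+ j') v L') ->
  forall p : 'rV[R]_d, p != b ->
    (forall i, (angle_vp (b - p) (Lam i) <= (beta ^+ d)%:E)%E) ->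
    (angle_vp (b - p) (perp_plane LB b) <= alpha%:E)%E.
Proof.
move=> alpha_gt0; pose a := Num.min alpha (1 / 2); pose s := sin a ^+ 2.
have pi_ge2 := pi_ge2 R.
have a_gt0 : 0 < a by rewrite lt_min alpha_gt0 /=; lra.
have a_le : a <= 1 / 2 by rewrite ge_min lexx orbT.
have s_gt0 : 0 < s by rewrite exprn_gt0 // sin_gt0_pihalf // a_gt0; lra.
have s_le1 : s <= 1 by rewrite -(cos2Dsin2 a) lerDr sqr_ge0.
exists (Num.min 1 (s * cos 1 ^+ 2 / 320)); split.
  by rewrite lt_min ltr01 /= divr_gt0 // mulr_gt0 // exprn_gt0 // cos1_gt0.
move=> beta beta_gt0; rewrite le_min => /andP[beta_le1 beta_small].
move=> m Lam v b _ v_normal _ j LB LBb [[c [W [rankW LBE]]] LB_flat] j_min p pb near_Lam.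
have [u [q [uW qW pE]]] := orth_decomp W (b - p).
rewrite pE in near_Lam *.
have [u_large|u_small] := ltP (s * dotv (u + q) (u + q)) (dotv u u).
  have j_gt0 : (0 < j)%N.
    by have := mxrankS uW; rewrite rank_rV (component_neq0 s_gt0 u_large) rankW.
  exfalso; apply: (j_min j.-1); first by rewrite prednK.
  exists (affine_plane b (W :&: kermx u^T)%MS); split.
    by rewrite /affine_plane /= subrr sub0mx.
  rewrite -{1}rankW; apply: (flat_wrt_slice (t := beta ^+ j) (c := c) uW qW s_gt0 s_le1 u_large b).
  - exact: v_normal.
  - exact: exprn_gt0.
  - by rewrite exprn_ge0 ?exprn_ile1 // ltW.
  - have -> : beta ^+ j = beta * beta ^+ j.-1 by rewrite -exprS prednK.
    have : 320 * beta ^+ 2 <= s * cos 1 ^+ 2 by move: beta_small; nra.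
    by have := sqr_ge0 (beta ^+ j.-1); rewrite !exprMn; nra.
  - move=> i; apply: le_trans (near_Lam i) _.
    by rewrite lee_fin ler_wiXn2l ?(ltW beta_gt0) // -rankW rank_leq_col.
  - by rewrite /affine_plane -LBE.
apply: (le_trans (y := a%:E)); last by rewrite lee_fin ge_min lexx.
apply: angle_vp_le_orth.
- apply: diffset_perp_plane => w; rewrite LBE diffset_affine_plane.
  exact: dotv_kermx_tr.
- by rewrite dotvC (dotv_kermx_tr qW uW).
- by rewrite ltW //=; lra.
- by rewrite -pE subr_eq0 eq_sym.
- exact: u_small.
Qed.
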